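(* Consider a ReLU network without biases with widths $n_0,\dots,n_L$ and two activation patterns $A_1=(A_1^1,\dots,A_1^{L-1})$, $A_2=(A_2^1,\dots,A_2^{L-1})$. Let $n_{\min}=\min_{\ell\in[L-1]}n_\ell$, $I_{\min}=\{\ell\in[L-1]:n_\ell=n_{\min}\}$, $\ell^+_{\min}=\max I_{\min}$, $\ell^-_{\min}=\min I_{\min}$. Let $r_i$ be the rank of $M_{A_i}(\theta)$ for generic $\theta$, and let $t=r_a+r_b$. Then $J^{\mathbf{A}}$ contains: 1. all $(r_1+1)$-minors of $M_1$; 2. all $(r_2+1)$-minors of $M_2$; 3a. all $(n_{\min}+1)$-minors of $[M_1\mid M_2]$, provided $A_1^\ell=A_2^\ell$ for all $\ell$ with $L-1\ge\ell>\ell^+_{\min}$; 3b. all $(n_{\min}+1)$-minors of $[M_1^\top\mid M_2^\top]$, provided $A_1^\ell=A_2^\ell$ for all $\ell$ with $1\le\ell<\ell^-_{\min}$; 4. all $(t+1)$-minors of $M_1-M_2$.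
   Context: Parameters are $\theta=(W^{(1)},\dots,W^{(L)})$, $W^{(\ell)}=(w^{(\ell)}_{ij})\in\mathbb{R}^{n_\ell\times n_{\ell-1}}$, and $M_A(\theta)=W^{(L)}\operatorname{diag}(A^{L-1})W^{(L-1)}\cdots\operatorname{diag}(A^1)W^{(1)}$. A path is $p=(p_1,\dots,p_{L-1})$ with $p_\ell\in[n_\ell]$; it is $A$-active if $A^\ell_{p_\ell}=1$ for all $\ell$. Let $R_1$, $R_2$ be the sets of $A_1$-active and $A_2$-active paths and $S=R_1\cap R_2$. For a set of paths $P$, the path network matrix is $M^P(\theta)\in\mathbb{R}^{n_L\times n_0}$ with $M^P(\theta)_{ij}=\sum_{p\in P}w^{(1)}_{p_1j}w^{(2)}_{p_2p_1}\cdots w^{(L-1)}_{p_{L-1}p_{L-2}}w^{(L)}_{ip_{L-1}}$, and the rank of the path network is the rank of $M^P(\theta)$ for generic $\theta$. $r_a$ and $r_b$ are the ranks of the path networks of $R_1\setminus S$ and $R_2\setminus S$. $J^{\mathbf{A}}\subseteq\mathbb{C}[m^{(1)}_{ij},m^{(2)}_{ij}]$ is the vanishing ideal of the Zariski closure in $\mathbb{C}^{n_L\times n_0}\times\mathbb{C}^{n_L\times n_0}$ of $\{(M_{A_1}(\theta),M_{A_2}(\theta)):\theta\}$, with coordinate matrices $M_1=(m^{(1)}_{ij})$, $M_2=(m^{(2)}_{ij})$. *)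

From HB Require Import structures.
From mathcomp Require Import all_boot all_order all_algebra.
From mathcomp Require Import complex.
From mathcomp Require Import Rstruct.
From mathcomp Require Import mpoly.
Set Implicit Arguments. Unset Strict Implicit. Unset Printing Implicit Defensive.
Import GRing.Theory.
Local Open Scope ring_scope.

Notation RR := Rdefinitions.R.
Definition CC := complex RR.
Definition toC (x : RR) : CC := Complex x 0.

Section Network.
(* widths n_0, n_1, ..., n_L  (only n 0 .. n L matter); L = Lp.+2 >= 2 *)
Variable n : nat -> nat.

(* Parameters theta: W k is the weight matrix W^{(k+1)} in R^{n_{k+1} x n_k}.
   Only W 0, ..., W (L-1) are used. *)
Definition params := forall k : nat, 'M[RR]_(n k.+1, n k).

(* An activation pattern: A l i = A^l_i (only l = 1 .. L-1 are used). *)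
Definition actpat := forall l : nat, 'I_(n l) -> bool.

Definition diagA (A : actpat) (l : nat) : 'M[RR]_(n l) :=
  diag_mx (\row_i ((A l i)%:R : RR)).

Fixpoint netM (A : actpat) (W : params) (k : nat) : 'M[RR]_(n k.+1, n 0%N) :=
  match k with
  | 0 => W 0%N
  | k'.+1 => W k'.+1 *m diagA A k'.+1 *m netM A W k'
  end.

Definition MA (Lp : nat) (A : actpat) (W : params) : 'M[RR]_(n Lp.+2, n 0%N) :=
  netM A W Lp.+1.

(* Paths p = (p_1, ..., p_{L-1}); p k is p_{k+1} in [n_{k+1}] *)
Definition npath (Lp : nat) := {dffun forall k : 'I_Lp.+1, 'I_(n k.+1)}.

Definition pnat (Lp : nat) (p : npath Lp) (l : nat) : nat :=
  if insub l is Some l' then val (p l') else 0.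

(* entry of a matrix at natural-number indices (0 outside the range) *)
Definition ent (r c : nat) (M : 'M[RR]_(r, c)) (i j : nat) : RR :=
  if insub i is Some i' then if insub j is Some j' then M i' j' else 0 else 0.

Definition active (Lp : nat) (A : actpat) (p : npath Lp) : bool :=
  [forall k : 'I_Lp.+1, A k.+1 (p k)].

(* w^{(1)}_{p_1 j} w^{(2)}_{p_2 p_1} ... w^{(L-1)}_{p_{L-1} p_{L-2}} w^{(L)}_{i p_{L-1}} *)
Definition path_weight (Lp : nat) (W : params) (p : npath Lp)
    (i : 'I_(n Lp.+2)) (j : 'I_(n 0%N)) : RR :=
  W 0%N (p ord0) j
  * (\prod_(k < Lp) ent (W k.+1) (pnat p k.+1) (pnat p k))
  * W Lp.+1 i (p ord_max).

Definition pathM (Lp : nat) (P : pred (npath Lp)) (W : params)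
    : 'M[RR]_(n Lp.+2, n 0%N) :=
  \matrix_(i, j) \sum_(p | P p) path_weight W p i j.

End Network.

(* "rank of f theta for generic theta": the maximal rank, attained on a
   nonempty Zariski-open (hence dense) set of parameters. *)
Definition is_generic_rank (T : Type) (f : T -> nat) (r : nat) : Prop :=
  (exists t, f t = r) /\ (forall t, (f t <= r)%N).

Section Ideal.
Variables m c : nat.
(* polynomial ring C[m^(1)_{ij}, m^(2)_{ij}], i in [m], j in [c] *)
Definition nvars := (m * c + m * c)%N.
Definition Poly := {mpoly CC[nvars]}.

Definition Mvar1 : 'M[Poly]_(m, c) :=
  \matrix_(i, j) 'X_(lshift (m * c) (mxvec_index i j)).
Definition Mvar2 : 'M[Poly]_(m, c) :=
  \matrix_(i, j) 'X_(rshift (m * c) (mxvec_index i j)).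

Definition pt (M1 M2 : 'M[CC]_(m, c)) : 'I_nvars -> CC :=
  fun v => match split v with
           | inl a => mxvec M1 0 a
           | inr b => mxvec M2 0 b
           end.

Definition zariski_closure (S : ('I_nvars -> CC) -> Prop) (x : 'I_nvars -> CC) : Prop :=
  forall g : Poly, (forall s, S s -> g.@[s] = 0) -> g.@[x] = 0.

Definition vanishing_ideal (V : ('I_nvars -> CC) -> Prop) (f : Poly) : Prop :=
  forall x, V x -> f.@[x] = 0.
End Ideal.

Definition JA (n : nat -> nat) (Lp : nat) (A1 A2 : actpat n) : Poly (n Lp.+2) (n 0%N) -> Prop :=
  vanishing_ideal (zariski_closure
    (fun x => exists W : params n,
        x = pt (map_mx toC (MA Lp A1 W)) (map_mx toC (MA Lp A2 W)))).

Definition minor (R : comNzRingType) (a b r : nat) (X : 'M[R]_(a, b))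
    (f : 'I_r -> 'I_a) (g : 'I_r -> 'I_b) : R :=
  \det (\matrix_(i, j) X (f i) (g j)).

(* n_min and the extreme indices of I_min, for layers 1 .. L-1 = 1 .. Lp.+1 *)
Definition nmin (n : nat -> nat) (Lp : nat) : nat :=
  \big[minn/n 1]_(l < Lp.+1) n l.+1.
Definition lmin_plus (n : nat -> nat) (Lp : nat) : nat :=
  \max_(l < Lp.+1 | n l.+1 == nmin n Lp) l.+1.
Definition lmin_minus (n : nat -> nat) (Lp : nat) : nat :=
  \big[minn/Lp.+1]_(l < Lp.+1 | n l.+1 == nmin n Lp) l.+1.

(* Each polynomial is an (r+1)-minor of a matrix built from M_1 and M_2
   which, evaluated at (M_{A_1}(theta), M_{A_2}(theta)), is a real matrix of
   rank at most r for every theta; so it vanishes on the parametrised set,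
   hence on its Zariski closure.  The rank bounds:
   1, 2: r_i is the maximal rank of M_{A_i}.
   3a: if the patterns agree above the last layer l of minimal width, then
       M_{A_1} and M_{A_2} have a common left factor with n_l = n_min columns;
       3b: dually, a common right factor below the first such layer.
   4: M_A is the path network of the A-active paths, so the paths active
       for both patterns cancel in M_{A_1} - M_{A_2}, leaving
       M^{R_1 \ S} - M^{R_2 \ S}, of rank at most r_a + r_b. *)

From Pilot Require Import Defs.
From HB Require Import structures.
From mathcomp Require Import all_boot all_order all_algebra.
From mathcomp Require Import complex.
From mathcomp Require Import Rstruct.
From mathcomp Require Import mpoly.
Import GRing.Theory.
Local Open Scope ring_scope.
Set Implicit Arguments. Unset Strict Implicit. Unset Printing Implicit Defensive.

Lemma mxrank_mxsub (R : fieldType) m n m' n' (f : 'I_m' -> 'I_m)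
    (g : 'I_n' -> 'I_n) (A : 'M[R]_(m, n)) :
  (\rank (mxsub f g A) <= \rank A)%N.
Proof.
rewrite -[A]mul1mx mxsub_mul mul1mx.
have -> : colsub g A = A *m colsub g 1%:M by rewrite mulmx_colsub mulmx1.
by rewrite mulmxA; apply: leq_trans (mxrankM_maxl _ _) (mxrankM_maxr _ _).
Qed.

Lemma minor_eq0 (R : fieldType) a b r (X : 'M[R]_(a, b)) (f : 'I_r.+1 -> 'I_a) g :
  (\rank X <= r)%N -> minor X f g = 0.
Proof.
move=> rankX; apply/eqP; apply: contraTT rankX => /negPf minor_neq0.
have /mxrank_unit rank_sub : mxsub f g X \in unitmx.
  by rewrite unitmxE unitfE -/(minor X f g) minor_neq0.
by rewrite -ltnNge -[X in (X <= _)%N]rank_sub mxrank_mxsub.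
Qed.

Lemma minor_map (R S : comNzRingType) (phi : {rmorphism R -> S}) a b r
    (X : 'M[R]_(a, b)) (f : 'I_r -> 'I_a) g :
  minor (map_mx phi X) f g = phi (minor X f g).
Proof.
by rewrite /minor -det_map_mx; congr (\det _); apply/matrixP => i j; rewrite !mxE.
Qed.

Lemma minor_meval m c a b r (X : 'M[Defs.Poly m c]_(a, b)) (f : 'I_r -> 'I_a) g v :
  (minor X f g).@[v] = minor (map_mx (meval v) X) f g.
Proof. by rewrite (minor_map (meval v)). Qed.

Lemma meval_Mvar1 m c (M1 M2 : 'M[CC]_(m, c)) :
  map_mx (meval (pt M1 M2)) (Mvar1 m c) = M1.
Proof.
apply/matrixP => i j; rewrite !mxE mevalXU /pt.
by rewrite (unsplitK (inl _ : 'I_(m * c) + 'I_(m * c))) mxvecE.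
Qed.

Lemma meval_Mvar2 m c (M1 M2 : 'M[CC]_(m, c)) :
  map_mx (meval (pt M1 M2)) (Mvar2 m c) = M2.
Proof.
apply/matrixP => i j; rewrite !mxE mevalXU /pt.
by rewrite (unsplitK (inr _ : 'I_(m * c) + 'I_(m * c))) mxvecE.
Qed.

Section Image.
Variables (n : nat -> nat) (Lp : nat) (A1 A2 : actpat n).

Definition image_pt (W : params n) : 'I_(nvars (n Lp.+2) (n 0)) -> CC :=
  pt (map_mx toC (MA Lp A1 W)) (map_mx toC (MA Lp A2 W)).

Lemma JA_minor a b r (X : 'M_(a, b)) (E : params n -> 'M[RR]_(a, b))
    (f : 'I_r.+1 -> 'I_a) g :
  (forall W, map_mx (meval (image_pt W)) X = map_mx (real_complex RR) (E W)) ->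
  (forall W, \rank (E W) <= r)%N ->
  JA A1 A2 (minor X f g).
Proof.
move=> evalX rankE x in_closure; apply: in_closure => _ [W ->].
by rewrite minor_meval -/(image_pt W) evalX minor_map minor_eq0 ?rmorph0.
Qed.

Lemma meval_image1 W :
  map_mx (meval (image_pt W)) (Mvar1 (n Lp.+2) (n 0)) =
  map_mx (real_complex RR) (MA Lp A1 W).
Proof. exact: meval_Mvar1. Qed.

Lemma meval_image2 W :
  map_mx (meval (image_pt W)) (Mvar2 (n Lp.+2) (n 0)) =
  map_mx (real_complex RR) (MA Lp A2 W).
Proof. exact: meval_Mvar2. Qed.

End Image.

Section Bottleneck.
Variable n : nat -> nat.
Implicit Types (A : actpat n) (W : params n).

Lemma eq_diagA A1 A2 l : A1 l =1 A2 l -> diagA A1 l = diagA A2 l.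
Proof. by move=> eqA; congr diag_mx; apply/rowP => i; rewrite !mxE eqA. Qed.

Lemma eq_netM A1 A2 W m :
  (forall j, (0 < j <= m)%N -> A1 j =1 A2 j) -> netM A1 W m = netM A2 W m.
Proof.
elim: m => [//|m IH] eqA /=.
rewrite IH => [|j /andP[j_gt0 j_le]]; last by apply: eqA; rewrite j_gt0 ltnW.
by rewrite (@eq_diagA A1 A2) //; apply: eqA; rewrite leqnn.
Qed.

Lemma netM_factor A W m d :
  exists X : 'M_(n (d + m).+1, n m.+1), netM A W (d + m) = X *m netM A W m.
Proof.
elim: d => [|d [X eqX]]; first by exists 1%:M; rewrite mul1mx.
rewrite addSn; exists (W (d + m).+1 *m diagA A (d + m).+1 *m X).
by rewrite /= eqX !mulmxA.
Qed.

Lemma netM_factor_above A1 A2 W m d :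
  (forall j, (m.+1 < j <= d + m.+1)%N -> A1 j =1 A2 j) ->
  exists T : 'M_(n (d + m.+1).+1, n m.+1),
    netM A1 W (d + m.+1) = T *m (diagA A1 m.+1 *m netM A1 W m) /\
    netM A2 W (d + m.+1) = T *m (diagA A2 m.+1 *m netM A2 W m).
Proof.
elim: d => [|d IH] eqA; first by exists (W m.+1); rewrite !mulmxA.
have [|T [eq1 eq2]] := IH.
  by move=> j /andP[lt_mj le_j]; apply: eqA; rewrite lt_mj ltnW.
rewrite addSn; exists (W (d + m.+1).+1 *m diagA A1 (d + m.+1).+1 *m T).
rewrite /= eq1 eq2 !mulmxA (@eq_diagA A1 A2 (d + m.+1).+1) //.
by apply: eqA; rewrite ltnS leq_addl leqnn.
Qed.

Lemma netM_row_rank A1 A2 W l k :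
  (0 < l <= k)%N -> (forall j, (l < j <= k)%N -> A1 j =1 A2 j) ->
  (\rank (row_mx (netM A1 W k) (netM A2 W k)) <= n l)%N.
Proof.
case: l => [//|m] /andP[_ le_mk]; rewrite -(subnK le_mk) => eqA.
have [T [-> ->]] := netM_factor_above W eqA.
by rewrite -mul_mx_row; apply: leq_trans (mxrankM_maxl _ _) (rank_leq_col _).
Qed.

Lemma netM_col_rank A1 A2 W l k :
  (0 < l <= k)%N -> (forall j, (0 < j < l)%N -> A1 j =1 A2 j) ->
  (\rank (col_mx (netM A1 W k) (netM A2 W k)) <= n l)%N.
Proof.
case: l => [//|m] /andP[_ /ltnW le_mk]; rewrite -(subnK le_mk) => eqA.
have [X1 ->] := netM_factor A1 W m (k - m).
have [X2 ->] := netM_factor A2 W m (k - m).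
rewrite (@eq_netM A2 A1) => [|j j_le i]; last by rewrite eqA.
by rewrite -mul_col_mx; apply: leq_trans (mxrankM_maxr _ _) (rank_leq_row _).
Qed.

End Bottleneck.

Lemma ent_val r c (M : 'M[RR]_(r, c)) (i : 'I_r) (j : 'I_c) :
  ent M (val i) (val j) = M i j.
Proof. by rewrite /ent !valK. Qed.

Lemma ord_maxVwiden L (k : 'I_L.+2) :
  k = ord_max \/ exists k' : 'I_L.+1, k = widen_ord (leqnSn L.+1) k'.
Proof.
case: (unliftP ord_max k) => [k' ->|->]; last by left.
by right; exists k'; exact/val_inj/lift_max.
Qed.

Section Paths.
Variable n : nat -> nat.
Implicit Types (A : actpat n) (W : params n).

Lemma npath_val_eq L (p : npath n L) (k k' : 'I_L.+1) :
  val k = val k' -> val (p k) = val (p k').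
Proof. by move=> /val_inj ->. Qed.

Lemma pnat_val L (p : npath n L) l (lt_lL : (l < L.+1)%N) :
  Defs.pnat p l = val (p (Ordinal lt_lL)).
Proof. by rewrite /Defs.pnat insubT. Qed.

Lemma card_npath L : #|npath n L| = (\prod_(k < L.+1) n k.+1)%N.
Proof.
rewrite card_dep_ffun foldrE big_map -big_enum /=.
by apply: eq_bigr => k _; rewrite card_ord.
Qed.

Definition pbelast L (p : npath n L.+1) : npath n L :=
  [ffun k => p (widen_ord (leqnSn L.+1) k)].

Lemma pnat_pbelast L (p : npath n L.+1) l :
  (l <= L)%N -> Defs.pnat (pbelast p) l = Defs.pnat p l.
Proof.
move=> le_lL; rewrite (pnat_val _ (le_lL : l < L.+1)%N).
by rewrite (pnat_val _ (leqW le_lL : l < L.+2)%N) ffunE; apply: npath_val_eq.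
Qed.

Lemma active_pbelast L A (p : npath n L.+1) :
  active A p = active A (pbelast p) && A L.+2 (p ord_max).
Proof.
apply/forallP/andP => [act_p | [/forallP act_b act_last] k].
  split; last exact: (act_p ord_max).
  by apply/forallP => k; rewrite ffunE; exact: (act_p (widen_ord _ k)).
case: (ord_maxVwiden k) => [-> // | [k' ->]].
by have := act_b k'; rewrite ffunE.
Qed.

Lemma pbelast_bij L : bijective (fun p : npath n L.+1 => (pbelast p, p ord_max)).
Proof.
apply: inj_card_bij => [p1 p2 [/ffunP eq_b eq_last]|].
  apply/ffunP => k; case: (ord_maxVwiden k) => [-> // | [k' ->]].
  by have := eq_b k'; rewrite !ffunE.
by rewrite card_prod !card_npath card_ord [X in (_ <= X)%N]big_ord_recr.
Qed.

Lemma path_weight_pbelast L W (p : npath n L.+1) i j :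
  path_weight W p i j =
  path_weight W (pbelast p) (p ord_max) j * W L.+2 i (p ord_max).
Proof.
have first_eq : pbelast p ord0 = p ord0 :> 'I_(n 1).
  by apply: val_inj; rewrite ffunE; apply: npath_val_eq.
have last_eq : ent (W L.+1) (Defs.pnat p L.+1) (Defs.pnat p L) =
               W L.+1 (p ord_max) (pbelast p ord_max).
  rewrite -ent_val (pnat_val p (ltnSn L.+1)) (pnat_val p (ltnW (ltnSn L.+1))).
  by rewrite ffunE; congr ent; apply: npath_val_eq.
rewrite /path_weight first_eq big_ord_recr /= last_eq -!mulrA; do 2!congr (_ * _).
by apply: eq_bigr => k _; rewrite !pnat_pbelast // ltnW.
Qed.

Lemma mul_diagA_mxE A l p q (X : 'M[RR]_(p, n l)) (Y : 'M[RR]_(n l, q)) i j :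
  (X *m diagA A l *m Y) i j = \sum_(a | A l a) X i a * Y a j.
Proof.
rewrite mul_mx_diag !mxE [RHS]big_mkcond; apply: eq_bigr => a _.
by rewrite !mxE; case: (A l a); rewrite ?mulr1 ?mulr0 ?mul0r.
Qed.

Lemma netM1_pathM A W : netM A W 1 = pathM (fun p : npath n 0 => active A p) W.
Proof.
have active0 (p : npath n 0) : active A p = A 1%N (p ord0).
  by apply/forallP/idP => [/(_ ord0) | act k]; rewrite ?(ord1 k).
have p0_bij : bijective (fun p : npath n 0 => p ord0).
  apply: inj_card_bij => [p1 p2 eq0|]; last by rewrite card_npath big_ord1 card_ord.
  by apply/ffunP => k; rewrite (ord1 k).
apply/matrixP => i j; rewrite mul_diagA_mxE mxE.
rewrite (reindex (fun p : npath n 0 => p ord0)) /=; last exact: onW_bij.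
apply: eq_big => [p | p _]; first by rewrite active0.
rewrite /path_weight big_ord0 mulr1 mulrC; congr (_ * W _ _ _).
by apply/val_inj/npath_val_eq.
Qed.

Lemma pathM_activeS L A W :
  pathM (fun p : npath n L.+1 => active A p) W =
  W L.+2 *m diagA A L.+2 *m pathM (fun p : npath n L => active A p) W.
Proof.
apply/matrixP => i j; rewrite mul_diagA_mxE mxE.
under [RHS]eq_bigr => a _ do rewrite mxE big_distrr.
rewrite exchange_big pair_big /=.
rewrite (reindex (fun p : npath n L.+1 => (pbelast p, p ord_max))) /=; last first.
  exact/onW_bij/pbelast_bij.
apply: eq_big => [p | p _]; first by rewrite active_pbelast.
by rewrite path_weight_pbelast mulrC.
Qed.

Lemma netM_pathM L A W : netM A W L.+1 = pathM (fun p : npath n L => active A p) W.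
Proof.
elim: L => [|L IH]; first exact: netM1_pathM.
by rewrite pathM_activeS -IH.
Qed.

End Paths.

Section MinimalWidth.
Variables (n : nat -> nat) (Lp : nat).

Lemma nmin_attained : exists l : 'I_Lp.+1, n l.+1 = nmin n Lp.
Proof.
rewrite /nmin; elim/big_ind: _ => [|x y [l1 <-] [l2 <-]|l _]; first by exists ord0.
- by rewrite /minn; case: ltnP; [exists l1 | exists l2].
- by exists l.
Qed.

Lemma lmin_plus_bottleneck :
  exists l : 'I_Lp.+1, lmin_plus n Lp = l.+1 /\ n l.+1 = nmin n Lp.
Proof.
have [l0 min_l0] := nmin_attained.
rewrite /lmin_plus (bigmax_eq_arg l0) ?min_l0 //.
by case: arg_maxnP => [|l /eqP min_l _]; [rewrite min_l0 | exists l].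
Qed.

Lemma lmin_minus_bottleneck :
  exists l : 'I_Lp.+1, lmin_minus n Lp = l.+1 /\ n l.+1 = nmin n Lp.
Proof.
have [l0 min_l0] := nmin_attained.
(* On nat, [Order.min] is convertible to [minn]. *)
have := @Order.TotalTheory.bigmin_eq_arg _ nat _ Lp.+1 l0
  (fun l => n l.+1 == nmin n Lp) (fun l => l.+1).
rewrite -/(lmin_minus n Lp) => ->; [|by rewrite min_l0|by move=> l _; exact: ltn_ord].
by case: Order.TotalTheory.arg_minP => [|l /eqP min_l _]; [rewrite min_l0 | exists l].
Qed.
End MinimalWidth.


Section Patterns.
Variables (n : nat -> nat) (Lp : nat) (W : params n).
Implicit Types A : actpat n.

Lemma MA_row_rank A1 A2 :
  (forall l, (lmin_plus n Lp < l <= Lp.+1)%N -> A1 l =1 A2 l) ->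
  (\rank (row_mx (MA Lp A1 W) (MA Lp A2 W)) <= nmin n Lp)%N.
Proof.
move=> eqA; have [l [lmin_l nmin_l]] := lmin_plus_bottleneck n Lp.
rewrite -nmin_l; apply: netM_row_rank => [|j]; first exact: ltn_ord.
by rewrite -lmin_l; apply: eqA.
Qed.

Lemma MA_col_rank A1 A2 :
  (forall l, (0 < l < lmin_minus n Lp)%N -> A1 l =1 A2 l) ->
  (\rank (col_mx (MA Lp A1 W) (MA Lp A2 W)) <= nmin n Lp)%N.
Proof.
move=> eqA; have [l [lmin_l nmin_l]] := lmin_minus_bottleneck n Lp.
rewrite -nmin_l; apply: netM_col_rank => [|j]; first exact: ltn_ord.
by rewrite -lmin_l; apply: eqA.
Qed.

Lemma MA_sub_pathM A1 A2 :
  MA Lp A1 W - MA Lp A2 W =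
  pathM (fun p : npath n Lp => active A1 p && ~~ active A2 p) W
  - pathM (fun p : npath n Lp => active A2 p && ~~ active A1 p) W.
Proof.
rewrite /MA !netM_pathM; apply/matrixP => i j; rewrite !mxE.
rewrite (bigID (active A2)) (bigID (active A1) (active A2)) /= [X in X - _]addrC.
rewrite [in X in _ - X](eq_bigl (fun p => active A1 p && active A2 p)) ?addrKA //.
by move=> p; rewrite andbC.
Qed.

End Patterns.

Unset Implicit Arguments.

Theorem theorem6p4 (Lp : nat) (n : nat -> nat) (A1 A2 : actpat n)
    (r1 r2 ra rb : nat) :
  is_generic_rank (fun W : params n => \rank (MA Lp A1 W)) r1 ->
  is_generic_rank (fun W : params n => \rank (MA Lp A2 W)) r2 ->
  (* r_a : rank of the path network of R_1 \ S (A1-active, not A2-active) *)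
  is_generic_rank
    (fun W : params n => \rank (pathM (fun p : npath n Lp => active A1 p && ~~ active A2 p) W)) ra ->
  (* r_b : rank of the path network of R_2 \ S *)
  is_generic_rank
    (fun W : params n => \rank (pathM (fun p : npath n Lp => active A2 p && ~~ active A1 p) W)) rb ->
  let J := @JA n Lp A1 A2 in
  let M1 := Mvar1 (n Lp.+2) (n 0%N) in
  let M2 := Mvar2 (n Lp.+2) (n 0%N) in
  (* 1. *)
  (forall (f : 'I_r1.+1 -> 'I_(n Lp.+2)) (g : 'I_r1.+1 -> 'I_(n 0%N)),
      J (minor M1 f g)) /\
  (* 2. *)
  (forall (f : 'I_r2.+1 -> 'I_(n Lp.+2)) (g : 'I_r2.+1 -> 'I_(n 0%N)),
      J (minor M2 f g)) /\
  (* 3a. *)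
  ((forall l : nat, (lmin_plus n Lp < l <= Lp.+1)%N ->
       forall i : 'I_(n l), A1 l i = A2 l i) ->
   forall (f : 'I_(nmin n Lp).+1 -> 'I_(n Lp.+2))
          (g : 'I_(nmin n Lp).+1 -> 'I_(n 0%N + n 0%N)),
      J (minor (row_mx M1 M2) f g)) /\
  (* 3b. *)
  ((forall l : nat, (1 <= l < lmin_minus n Lp)%N ->
       forall i : 'I_(n l), A1 l i = A2 l i) ->
   forall (f : 'I_(nmin n Lp).+1 -> 'I_(n 0%N))
          (g : 'I_(nmin n Lp).+1 -> 'I_(n Lp.+2 + n Lp.+2)),
      J (minor (row_mx M1^T M2^T) f g)) /\
  (* 4. *)
  (forall (f : 'I_(ra + rb).+1 -> 'I_(n Lp.+2)) (g : 'I_(ra + rb).+1 -> 'I_(n 0%N)),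
      J (minor (M1 - M2) f g)).
Proof.
move=> [_ rank1] [_ rank2] [_ rank_a] [_ rank_b] J M1 M2; rewrite {}/J {}/M1 {}/M2.
split; [|split; [|split; [|split]]].
- by move=> f g; apply: (JA_minor (E := MA Lp A1)) => // W; rewrite meval_image1.
- by move=> f g; apply: (JA_minor (E := MA Lp A2)) => // W; rewrite meval_image2.
- move=> eqA f g.
  apply: (JA_minor (E := fun W => row_mx (MA Lp A1 W) (MA Lp A2 W))) => W.
    by rewrite !map_row_mx meval_image1 meval_image2.
  exact: (MA_row_rank W eqA).
- move=> eqA f g.
  apply: (JA_minor (E := fun W => row_mx (MA Lp A1 W)^T (MA Lp A2 W)^T)) => W.
    by rewrite !map_row_mx -!map_trmx meval_image1 meval_image2.
  by rewrite -tr_col_mx mxrank_tr; exact: (MA_col_rank W eqA).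
- move=> f g; apply: (JA_minor (E := fun W => MA Lp A1 W - MA Lp A2 W)) => W.
    by rewrite !map_mxB meval_image1 meval_image2.
  by rewrite MA_sub_pathM (leq_trans (mxrank_add _ _)) // mxrank_opp leq_add.
Qed.
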